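(* Let $1<\alpha<2$, $a<b$, and $q\in C[a,b]$. Suppose the boundary value problem $$T^a_\alpha u(t)+q(t)u(t)=0\ \ (a<t<b),\qquad u(a)=u(b)=0,$$ has a solution $u\in AC^2[a,b]$, twice differentiable on $(a,b)$, such that $u(t)\ne0$ for almost every $t\in(a,b)$. Then $$\int_a^b |q(s)|\,(s-a)^{\alpha-2}\,ds\ \ge\ \frac{4}{b-a}.$$
   Context: Conformable derivative: for $0<\beta<1$ and a function $h:[a,\infty)\to\mathbb{R}$, $T^a_\beta h(t)=\lim_{\varepsilon\to0}\frac{h(t+\varepsilon(t-a)^{1-\beta})-h(t)}{\varepsilon}$ for $t>a$, whenever the limit exists. For $1<\alpha<2$ and $g$ with derivative $g'$, $T^a_\alpha g(t)=T^a_{\alpha-1}g'(t)$; for $t>a$ this exists iff $g'$ is differentiable at $t$, and then $T^a_\alpha g(t)=(t-a)^{2-\alpha}g''(t)$. $AC^2[a,b]=\{u\in C^1[a,b]: u'\text{ absolutely continuous on }[a,b]\}$. A solution satisfies the equation at every $t\in(a,b)$ and the boundary conditions. *)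

From Stdlib Require Import Reals Lra List.
Import ListNotations.
Open Scope R_scope.

Definition continuous_on_cc (f : R -> R) (a b : R) : Prop :=
  forall t, a <= t <= b -> forall eps, 0 < eps -> exists delta, 0 < delta /\
    forall s, a <= s <= b -> Rabs (s - t) < delta -> Rabs (f s - f t) < eps.

Definition deriv_on_cc (f f' : R -> R) (a b : R) : Prop :=
  forall t, a <= t <= b -> forall eps, 0 < eps -> exists delta, 0 < delta /\
    forall s, a <= s <= b -> s <> t -> Rabs (s - t) < delta ->
      Rabs ((f s - f t) / (s - t) - f' t) < eps.

Fixpoint pairwise_disjoint (l : list (R * R)) : Prop :=
  match l with
  | [] => True
  | p :: l' => Forall (fun r => snd p <= fst r \/ snd r <= fst p) l' /\ pairwise_disjoint l'
  end.

Definition abs_continuous_on (f : R -> R) (a b : R) : Prop :=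
  forall eps, 0 < eps -> exists delta, 0 < delta /\
    forall l : list (R * R),
      Forall (fun p => a <= fst p <= snd p /\ snd p <= b) l ->
      pairwise_disjoint l ->
      fold_right (fun p s => (snd p - fst p) + s) 0 l < delta ->
      fold_right (fun p s => Rabs (f (snd p) - f (fst p)) + s) 0 l < eps.

Definition null_set (S : R -> Prop) : Prop :=
  forall eps, 0 < eps -> exists c d : nat -> R,
    (forall n, c n <= d n) /\
    (forall x, S x -> exists n, c n < x < d n) /\
    (forall N, sum_f_R0 (fun n => d n - c n) N < eps).

Definition conformable_deriv_lim (beta a : R) (h : R -> R) (t l : R) : Prop :=
  forall eps, 0 < eps -> exists delta, 0 < delta /\
    forall e, e <> 0 -> Rabs e < delta ->
      Rabs ((h (t + e * Rpower (t - a) (1 - beta)) - h t) / e - l) < eps.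

(* For 1<alpha<2: T^a_alpha g (t) = T^a_{alpha-1} g' (t), g' the derivative of g. *)
Definition conformable_deriv2_lim (alpha a : R) (g' : R -> R) (t l : R) : Prop :=
  conformable_deriv_lim (alpha - 1) a g' t l.

Definition improper_integral_left (f : R -> R) (a b I : R) : Prop :=
  forall eps, 0 < eps -> exists delta, 0 < delta /\
    forall c, a < c < a + delta -> c < b ->
      exists pr : Riemann_integrable f c b, Rabs (RiemannInt pr - I) < eps.

(* Let |u| attain its maximum M > 0 at an interior point c (u is not identically zero since
   its zero set is null). The mean value theorem on [a, c] and [c, b] gives slopes
   u'(x1) = u(c)/(c - a) and u'(x2) = - u(c)/(b - c), whose difference has absolute value
   M (b - a)/((c - a)(b - c)) >= 4 M/(b - a) by AM-GM. On the other hand the equation reads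
   u'' = - q (t - a)^(alpha - 2) u on (a, b), so |u'(x2) - u'(x1)| is at most
   M * int_a^b |q(s)| (s - a)^(alpha - 2) ds; the improper integral converges because
   alpha - 2 > -1. *)

From Stdlib Require Import Reals Lra Lia List Classical.
From Coquelicot Require Import Coquelicot.
Open Scope R_scope.

(* Extension of a function on [a, b] by its end values, so that Coquelicot's pointwise
   continuity, derivatives and integrals apply to data only controlled on [a, b]. *)
Definition clamp (a b s : R) : R := Rmax a (Rmin b s).

Lemma clamp_in a b s : a <= b -> a <= clamp a b s <= b.
Proof. intros; unfold clamp, Rmax, Rmin; repeat destruct Rle_dec; lra. Qed.

Lemma clamp_id a b s : a <= s <= b -> clamp a b s = s.
Proof. intros; unfold clamp, Rmax, Rmin; repeat destruct Rle_dec; lra. Qed.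

Lemma clamp_lipschitz a b s t : a <= b -> Rabs (clamp a b s - clamp a b t) <= Rabs (s - t).
Proof.
  intros; unfold clamp, Rmax, Rmin, Rabs.
  repeat destruct Rle_dec; repeat destruct Rcase_abs; lra.
Qed.

Lemma continuous_clamp_comp f a b t : a <= b -> continuous_on_cc f a b ->
  continuous (fun s => f (clamp a b s)) t.
Proof.
  intros Hab Hf; apply continuity_pt_filterlim; intros eps Heps.
  destruct (Hf (clamp a b t) (clamp_in a b t Hab) eps Heps) as [d [Hd Hc]].
  exists d; split; [exact Hd|]; intros s [_ Hs]; simpl in *; unfold R_dist in *.
  apply Hc; [apply clamp_in; exact Hab|].
  eapply Rle_lt_trans; [apply clamp_lipschitz; exact Hab | exact Hs].
Qed.

Lemma deriv_on_cc_continuous_on_cc u u' a b : deriv_on_cc u u' a b -> continuous_on_cc u a b.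
Proof.
  intros H t Ht eps Heps.
  destruct (H t Ht 1 Rlt_0_1) as [d [Hd Hc]].
  set (K := Rabs (u' t) + 1).
  assert (HK : 0 < K) by (unfold K; pose proof (Rabs_pos (u' t)); lra).
  exists (Rmin d (eps / K)); split.
  { apply Rmin_pos; [exact Hd | apply Rdiv_lt_0_compat; lra]. }
  intros s Hs Hst.
  destruct (Req_dec s t) as [->|Hne]; [rewrite Rminus_eq_0, Rabs_R0; exact Heps|].
  pose proof (Rmin_l d (eps / K)); pose proof (Rmin_r d (eps / K)).
  specialize (Hc s Hs Hne ltac:(lra)).
  set (D := (u s - u t) / (s - t)) in *.
  assert (HD : Rabs D < K).
  { unfold K; replace D with ((D - u' t) + u' t) by ring.
    eapply Rle_lt_trans; [apply Rabs_triang | lra]. }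
  replace (u s - u t) with (D * (s - t)) by (unfold D; field; lra).
  rewrite Rabs_mult.
  apply Rle_lt_trans with (K * Rabs (s - t)); [apply Rmult_le_compat_r; [apply Rabs_pos | lra]|].
  replace eps with (K * (eps / K)) by (field; lra).
  apply Rmult_lt_compat_l; lra.
Qed.

Lemma deriv_on_cc_clamp_interior u u' a b t : deriv_on_cc u u' a b -> a < t < b ->
  derivable_pt_lim (fun s => u (clamp a b s)) t (u' t).
Proof.
  intros H Ht eps Heps.
  destruct (H t ltac:(lra) eps Heps) as [d [Hd Hc]].
  assert (Hp : 0 < Rmin d (Rmin (t - a) (b - t))) by (repeat apply Rmin_pos; lra).
  exists (mkposreal _ Hp); intros h Hh Hhd; simpl in Hhd.
  pose proof (Rmin_l d (Rmin (t - a) (b - t))); pose proof (Rmin_r d (Rmin (t - a) (b - t))).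
  pose proof (Rmin_l (t - a) (b - t)); pose proof (Rmin_r (t - a) (b - t)).
  assert (Habs : - Rabs h <= h <= Rabs h) by (unfold Rabs; destruct Rcase_abs; lra).
  rewrite (clamp_id a b (t + h)), (clamp_id a b t) by lra.
  specialize (Hc (t + h) ltac:(lra) ltac:(lra)).
  replace (t + h - t) with h in Hc by ring.
  apply Hc; lra.
Qed.

Lemma Rpower_gt_0 x y : 0 < Rpower x y.
Proof. apply exp_pos. Qed.

Lemma is_derive_Rpower_shift a p s : a < s ->
  is_derive (fun s => Rpower (s - a) p) s (p * Rpower (s - a) (p - 1)).
Proof.
  intros Hs; apply is_derive_Reals.
  rewrite <- (Rmult_1_r (p * _)).
  apply (derivable_pt_lim_comp (fun s => s - a) (fun x => Rpower x p)).
  - apply is_derive_Reals; auto_derive; [exact I | ring].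
  - apply derivable_pt_lim_power; lra.
Qed.

Lemma continuous_Rpower_shift a p s : a < s -> continuous (fun s => Rpower (s - a) p) s.
Proof.
  intros Hs; apply (ex_derive_continuous (V := R_NormedModule)).
  eexists; apply is_derive_Rpower_shift; exact Hs.
Qed.

Lemma is_RInt_Rpower_shift a p c d : p <> 0 -> a < c -> a < d ->
  is_RInt (fun s => Rpower (s - a) (p - 1)) c d ((Rpower (d - a) p - Rpower (c - a) p) / p).
Proof.
  intros Hp Hc Hd.
  replace ((Rpower (d - a) p - Rpower (c - a) p) / p)
    with (/ p * Rpower (d - a) p - / p * Rpower (c - a) p) by (field; exact Hp).
  apply (is_RInt_derive (V := R_CompleteNormedModule) (fun s => / p * Rpower (s - a) p));
    intros z Hz; pose proof (Rmin_glb_lt _ _ _ Hc Hd).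
  - replace (Rpower (z - a) (p - 1)) with (/ p * (p * Rpower (z - a) (p - 1)))
      by (field; exact Hp).
    apply is_derive_scal, is_derive_Rpower_shift; lra.
  - apply continuous_Rpower_shift; lra.
Qed.

(* Substituting [e = h / k] with [k = (t - a)^(1 - beta)] turns the conformable difference
   quotient into [k] times the ordinary one. *)
Lemma conformable_deriv_lim_derivable beta a g t l : conformable_deriv_lim beta a g t l ->
  derivable_pt_lim g t (l / Rpower (t - a) (1 - beta)).
Proof.
  intros H eps Heps.
  set (k := Rpower (t - a) (1 - beta)) in *.
  assert (Hk : 0 < k) by apply Rpower_gt_0.
  destruct (H (eps * k) ltac:(apply Rmult_lt_0_compat; lra)) as [d [Hd Hc]].
  assert (Hp : 0 < d * k) by (apply Rmult_lt_0_compat; lra).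
  exists (mkposreal _ Hp); intros h Hh Hhd; simpl in Hhd.
  assert (He : h / k <> 0)
    by (apply Rmult_integral_contrapositive_currified; [exact Hh | apply Rinv_neq_0_compat; lra]).
  assert (Hed : Rabs (h / k) < d).
  { rewrite Rabs_div, (Rabs_right k) by lra.
    apply Rmult_lt_reg_r with k; [exact Hk|]; field_simplify; lra. }
  specialize (Hc (h / k) He Hed); fold k in Hc.
  replace (t + h / k * k) with (t + h) in Hc by (field; lra).
  replace ((g (t + h) - g t) / h - l / k) with (((g (t + h) - g t) / (h / k) - l) / k)
    by (field; lra).
  rewrite Rabs_div, (Rabs_right k) by lra.
  apply Rmult_lt_reg_r with k; [exact Hk|]; field_simplify; lra.
Qed.

Lemma conformable_deriv2_lim_derive alpha a g' t l :
  conformable_deriv2_lim alpha a g' t l -> is_derive g' t (l * Rpower (t - a) (alpha - 2)).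
Proof.
  intros H; apply is_derive_Reals.
  replace (alpha - 2) with (- (1 - (alpha - 1))) by ring.
  rewrite Rpower_Ropp.
  exact (conformable_deriv_lim_derivable _ _ _ _ _ H).
Qed.

Fixpoint total_length (L : list (R * R)) : R :=
  match L with
  | nil => 0
  | p :: L' => (snd p - fst p) + total_length L'
  end.

Lemma total_length_app L1 L2 : total_length (L1 ++ L2) = total_length L1 + total_length L2.
Proof. induction L1 as [|p L1 IH]; simpl; [ring | rewrite IH; ring]. Qed.

Lemma total_length_nonneg L : (forall p, In p L -> fst p <= snd p) -> 0 <= total_length L.
Proof.
  induction L as [|p L IH]; simpl; intros H; [lra|].
  pose proof (H p (or_introl eq_refl)); pose proof (IH (fun r Hr => H r (or_intror Hr))); lra.
Qed.

Lemma total_length_seq (c d : nat -> R) N :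
  total_length (map (fun n => (c n, d n)) (seq 0 (S N))) = sum_f_R0 (fun n => d n - c n) N.
Proof.
  induction N as [|N IH]; [simpl; ring|].
  rewrite seq_S, map_app, total_length_app, IH; simpl; ring.
Qed.

(* Induction on the number of intervals: remove the interval covering [x] and cover what
   is left of [x, y] to its right. *)
Lemma cover_length_le L : (forall p, In p L -> fst p <= snd p) ->
  forall x y, x <= y -> (forall z, x <= z <= y -> exists p, In p L /\ fst p < z < snd p) ->
  y - x <= total_length L.
Proof.
  remember (length L) as n eqn:Hn; assert (Hlen : (length L <= n)%nat) by lia.
  clear Hn; revert L Hlen.
  induction n as [|n IH]; intros L Hlen Hle x y Hxy Hcov;
    destruct (Hcov x ltac:(lra)) as [p [Hp Hpx]];
    [destruct L; [destruct Hp | simpl in Hlen; lia]|].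
  destruct (in_split p L Hp) as [L1 [L2 ->]].
  assert (Hle' : forall r, In r (L1 ++ L2) -> fst r <= snd r)
    by (intros r Hr; apply Hle, in_or_app; apply in_app_or in Hr; simpl; tauto).
  assert (Hrest := total_length_nonneg _ Hle').
  rewrite total_length_app in *; simpl.
  destruct (Rlt_dec y (snd p)) as [Hy|Hy]; [lra|].
  assert (y - snd p <= total_length (L1 ++ L2)); [|rewrite total_length_app in *; lra].
  apply IH; [rewrite length_app in *; simpl in Hlen; lia | exact Hle' | lra|].
  intros z Hz; destruct (Hcov z ltac:(lra)) as [r [Hr Hrz]].
  exists r; split; [|exact Hrz].
  apply in_app_or in Hr; apply in_or_app; destruct Hr as [Hr|[<-|Hr]]; auto; lra.
Qed.

(* Heine-Borel: the supremum of the points up to which finitely many of the intervals cover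
   [x, y] is [y]. *)
Lemma finite_subcover (c d : nat -> R) x y : x <= y ->
  (forall z, x <= z <= y -> exists n, c n < z < d n) ->
  exists N, forall z, x <= z <= y -> exists n, (n <= N)%nat /\ c n < z < d n.
Proof.
  intros Hxy Hc.
  set (E := fun z => x <= z <= y /\ exists N, forall w, x <= w <= z ->
                       exists n, (n <= N)%nat /\ c n < w < d n).
  assert (Ex : E x).
  { split; [lra|]; destruct (Hc x ltac:(lra)) as [n0 Hn0].
    exists n0; intros w Hw; exists n0; split; [lia|]; replace w with x by lra; exact Hn0. }
  destruct (completeness E (ex_intro _ y (fun z Ez => proj2 (proj1 Ez))) (ex_intro _ x Ex))
    as [s [Hs1 Hs2]].
  assert (Hxs : x <= s) by (apply Hs1; exact Ex).
  assert (Hsy : s <= y) by (apply Hs2; intros z [Hz _]; lra).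
  destruct (Hc s ltac:(lra)) as [n0 Hn0].
  assert (HEn0 : exists z, E z /\ c n0 < z).
  { apply NNPP; intros Hno; assert (s <= c n0); [|lra].
    apply Hs2; intros z Ez; apply Rnot_lt_le; intros Hz; apply Hno; exists z; split; assumption. }
  destruct HEn0 as [z [[Hz [N HN]] Hzc]].
  set (m := (s + d n0) / 2).
  assert (Hext : forall z', x <= z' <= Rmin y m -> E z').
  { intros z' Hz'; pose proof (Rmin_l y m); pose proof (Rmin_r y m).
    split; [lra|]; exists (max N n0); intros w Hw.
    destruct (Rle_dec w z) as [Hwz|Hwz].
    - destruct (HN w ltac:(lra)) as [n [Hn Hnw]]; exists n; split; [lia | exact Hnw].
    - exists n0; split; [lia | unfold m in *; lra]. }
  destruct (Rle_dec y m) as [Hy|Hy].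
  - destruct (Hext y ltac:(rewrite Rmin_left by lra; lra)) as [_ [N' HN']]; exists N'; exact HN'.
  - assert (m <= s) by (apply Hs1, Hext; rewrite Rmin_right by lra; unfold m; lra).
    unfold m in *; lra.
Qed.

Lemma null_set_interval_exists_not a b (P : R -> Prop) : a < b ->
  null_set (fun t => a < t < b /\ P t) -> exists t, a < t < b /\ ~ P t.
Proof.
  intros Hab Hnull; apply NNPP; intros Hall.
  destruct (Hnull ((b - a) / 2) ltac:(lra)) as [c [d [Hcd [Hcov Hsum]]]].
  set (x := a + (b - a) / 4); set (y := b - (b - a) / 4).
  assert (Hc : forall z, x <= z <= y -> exists n, c n < z < d n).
  { intros z Hz; apply Hcov; unfold x, y in Hz; split; [lra|].
    apply NNPP; intros HP; apply Hall; exists z; split; [lra | exact HP]. }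
  destruct (finite_subcover c d x y ltac:(unfold x, y; lra) Hc) as [N HN].
  assert (y - x <= sum_f_R0 (fun n => d n - c n) N).
  { rewrite <- total_length_seq; apply cover_length_le; [| unfold x, y; lra |].
    - intros p Hp; apply in_map_iff in Hp; destruct Hp as [n [<- _]]; apply Hcd.
    - intros z Hz; destruct (HN z Hz) as [n [Hn Hnz]]; exists (c n, d n); split; [|exact Hnz].
      apply in_map_iff; exists n; split; [reflexivity | apply in_seq; lia]. }
  specialize (Hsum N); unfold x, y in *; lra.
Qed.

Lemma improper_integral_left_ext f g a b I : (forall s, a < s < b -> f s = g s) ->
  improper_integral_left f a b I -> improper_integral_left g a b I.
Proof.
  intros Hfg H eps Heps; destruct (H eps Heps) as [d [Hd Hc]]; exists d; split; [exact Hd|].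
  intros c Hc1 Hc2; destruct (Hc c Hc1 Hc2) as [pr Hpr].
  assert (Hext : forall s, Rmin c b < s < Rmax c b -> f s = g s).
  { rewrite Rmin_left, Rmax_right by lra; intros s Hs; apply Hfg; lra. }
  pose proof (ex_RInt_ext f g c b Hext (ex_RInt_Reals_1 _ _ _ pr)) as Hg.
  exists (ex_RInt_Reals_0 _ _ _ Hg).
  rewrite <- RInt_Reals, <- (RInt_ext f g c b Hext), RInt_Reals with (pr := pr); exact Hpr.
Qed.

(* For a nonnegative integrand the partial integrals grow as the left end point decreases,
   so their supremum is the improper integral. *)
Lemma improper_integral_left_of_bounded f a b B : a < b ->
  (forall s, a < s <= b -> continuous f s) -> (forall s, 0 <= f s) ->
  (forall c, a < c < b -> RInt f c b <= B) ->
  exists I, improper_integral_left f a b I /\ forall c, a < c < b -> RInt f c b <= I.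
Proof.
  intros Hab Hcont Hpos HB.
  assert (Hex : forall c d, a < c <= b -> a < d <= b -> ex_RInt f c d).
  { intros c d Hc Hd; apply (ex_RInt_continuous (V := R_CompleteNormedModule)); intros z Hz.
    pose proof (Rmin_glb_lt _ _ _ (proj1 Hc) (proj1 Hd)).
    pose proof (Rmax_lub _ _ _ (proj2 Hc) (proj2 Hd)); apply Hcont; lra. }
  assert (Hmono : forall c1 c2, a < c1 <= c2 -> c2 <= b -> RInt f c2 b <= RInt f c1 b).
  { intros c1 c2 Hc Hc2.
    rewrite <- (RInt_Chasles f c1 c2 b) by (apply Hex; lra); simpl.
    assert (0 <= RInt f c1 c2) by (apply RInt_ge_0; [lra | apply Hex; lra | intros; apply Hpos]).
    unfold plus; simpl; lra. }
  set (E := fun y => exists c, a < c < b /\ y = RInt f c b).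
  assert (HE : exists y, E y)
    by (exists (RInt f ((a + b) / 2) b), ((a + b) / 2); split; [lra | reflexivity]).
  assert (HEb : bound E) by (exists B; intros y [c [Hc ->]]; apply HB; exact Hc).
  destruct (completeness E HEb HE) as [I [HI1 HI2]].
  assert (Hle : forall c, a < c < b -> RInt f c b <= I)
    by (intros c Hc; apply HI1; exists c; split; [exact Hc | reflexivity]).
  exists I; split; [|exact Hle].
  intros eps Heps.
  assert (Hnear : exists c0, a < c0 < b /\ I - eps < RInt f c0 b).
  { apply NNPP; intros Hno; assert (I <= I - eps); [|lra].
    apply HI2; intros y [c [Hc ->]]; apply Rnot_lt_le; intros Hlt.
    apply Hno; exists c; split; assumption. }
  destruct Hnear as [c0 [Hc0 Hlt]].
  exists (c0 - a); split; [lra|]; intros c Hc Hcb.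
  exists (ex_RInt_Reals_0 _ _ _ (Hex c b ltac:(lra) ltac:(lra))); rewrite <- RInt_Reals.
  pose proof (Hmono c c0 ltac:(lra) ltac:(lra)); pose proof (Hle c ltac:(lra)).
  apply Rabs_def1; lra.
Qed.

Definition weight (q : R -> R) (a b alpha s : R) : R :=
  Rabs (q (clamp a b s)) * Rpower (s - a) (alpha - 2).

Lemma weight_nonneg q a b alpha s : 0 <= weight q a b alpha s.
Proof. apply Rmult_le_pos; [apply Rabs_pos | left; apply Rpower_gt_0]. Qed.

Lemma continuous_weight q a b alpha s : a <= b -> continuous_on_cc q a b -> a < s ->
  continuous (weight q a b alpha) s.
Proof.
  intros Hab Hq Hs; apply (continuous_mult (K := R_AbsRing)).
  - apply (continuous_Rabs_comp (fun s => q (clamp a b s))), continuous_clamp_comp; assumption.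
  - apply continuous_Rpower_shift; exact Hs.
Qed.

Lemma ex_RInt_weight q a b alpha x y : a <= b -> continuous_on_cc q a b -> a < x -> a < y ->
  ex_RInt (weight q a b alpha) x y.
Proof.
  intros Hab Hq Hx Hy; apply (ex_RInt_continuous (V := R_CompleteNormedModule)); intros z Hz.
  pose proof (Rmin_glb_lt _ _ _ Hx Hy); apply continuous_weight; [exact Hab | exact Hq | lra].
Qed.

Lemma RInt_weight_le q a b alpha x y z : a <= b -> continuous_on_cc q a b ->
  a < x <= y -> y <= z ->
  RInt (weight q a b alpha) x y <= RInt (weight q a b alpha) x z.
Proof.
  intros Hab Hq Hxy Hyz.
  assert (Hex : forall s t, a < s -> a < t -> ex_RInt (weight q a b alpha) s t)
    by (intros; apply ex_RInt_weight; assumption).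
  rewrite <- (RInt_Chasles (weight q a b alpha) x y z) by (apply Hex; lra).
  assert (0 <= RInt (weight q a b alpha) y z); [|simpl; unfold plus; simpl; lra].
  apply RInt_ge_0; [exact Hyz | apply Hex; lra | intros; apply weight_nonneg].
Qed.

Lemma RInt_weight_bounded q a b alpha : 1 < alpha -> a < b -> continuous_on_cc q a b ->
  exists B, forall c, a < c < b -> RInt (weight q a b alpha) c b <= B.
Proof.
  intros Hal Hab Hq.
  destruct (continuity_ab_maj (fun s => Rabs (q (clamp a b s))) a b ltac:(lra)) as [m [Hm _]].
  { intros s _; apply continuity_pt_filterlim.
    apply (continuous_Rabs_comp (fun s => q (clamp a b s))), continuous_clamp_comp;
      [lra | exact Hq]. }
  set (K := Rabs (q (clamp a b m))) in *.
  exists (K * (Rpower (b - a) (alpha - 1) / (alpha - 1))); intros c Hc.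
  pose proof (is_RInt_Rpower_shift a (alpha - 1) c b ltac:(lra) ltac:(lra) ltac:(lra)) as Hi.
  replace (alpha - 1 - 1) with (alpha - 2) in Hi by ring.
  apply Rle_trans with (RInt (fun s => K * Rpower (s - a) (alpha - 2)) c b).
  - apply RInt_le; [lra | apply ex_RInt_weight; [lra | exact Hq | lra | lra] | |].
    + exists (scal K ((Rpower (b - a) (alpha - 1) - Rpower (c - a) (alpha - 1)) / (alpha - 1))).
      apply (is_RInt_scal (V := R_NormedModule)); exact Hi.
    + intros s Hs; apply Rmult_le_compat_r; [left; apply Rpower_gt_0 | apply Hm; lra].
  - rewrite (RInt_scal (V := R_CompleteNormedModule)) by (eexists; exact Hi).
    rewrite (is_RInt_unique _ _ _ _ Hi).
    apply Rmult_le_compat_l; [apply Rabs_pos|].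
    pose proof (Rpower_gt_0 (c - a) (alpha - 1)).
    unfold Rdiv; apply Rmult_le_compat_r; [left; apply Rinv_0_lt_compat; lra | lra].
Qed.

Lemma improper_integral_weight q a b alpha : 1 < alpha -> a < b -> continuous_on_cc q a b ->
  exists I, improper_integral_left (fun s => Rabs (q s) * Rpower (s - a) (alpha - 2)) a b I /\
    forall c, a < c < b -> RInt (weight q a b alpha) c b <= I.
Proof.
  intros Hal Hab Hq.
  destruct (RInt_weight_bounded q a b alpha Hal Hab Hq) as [B HB].
  destruct (improper_integral_left_of_bounded (weight q a b alpha) a b B Hab) as [I [HI Hle]];
    [intros s Hs; apply continuous_weight; [lra | exact Hq | lra]
    | apply weight_nonneg | exact HB |].
  exists I; split; [|exact Hle].
  apply (improper_integral_left_ext (weight q a b alpha)); [|exact HI].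
  intros s Hs; unfold weight; rewrite clamp_id by lra; reflexivity.
Qed.

Lemma MVT_open (f df : R -> R) x y : x < y ->
  (forall t, x < t < y -> derivable_pt_lim f t (df t)) ->
  (forall t, x <= t <= y -> continuity_pt f t) ->
  exists c, x < c < y /\ f y - f x = df c * (y - x).
Proof.
  intros Hxy Hd Hc.
  destruct (MVT f id x y (fun t Ht => exist _ (df t) (Hd t Ht))
              (fun t _ => derivable_pt_id t) Hxy Hc
              (fun t _ => derivable_continuous_pt _ _ (derivable_pt_id t))) as [c [Hcxy E]].
  exists c; split; [exact Hcxy|]; simpl in E; unfold id in E.
  rewrite derive_pt_id in E; lra.
Qed.

Lemma deriv_on_cc_MVT u u' a b x y : deriv_on_cc u u' a b -> a <= x < y -> y <= b ->
  exists z, x < z < y /\ u y - u x = u' z * (y - x).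
Proof.
  intros Hd Hx Hy.
  assert (Hu := deriv_on_cc_continuous_on_cc _ _ _ _ Hd).
  destruct (MVT_open (fun s => u (clamp a b s)) u' x y) as [z [Hz E]];
    [lra | intros t Ht; apply deriv_on_cc_clamp_interior; [exact Hd | lra]
    | intros t _; apply continuity_pt_filterlim, continuous_clamp_comp; [lra | exact Hu] |].
  exists z; split; [exact Hz|]; rewrite !clamp_id in E by lra; exact E.
Qed.

Lemma Rabs_sub_le_RInt (f g h : R -> R) x y : x <= y ->
  (forall z, x <= z <= y -> is_derive f z (g z)) ->
  (forall z, x <= z <= y -> continuous g z) ->
  (forall z, x <= z <= y -> continuous h z) ->
  (forall z, x < z < y -> Rabs (g z) <= h z) ->
  Rabs (f y - f x) <= RInt h x y.
Proof.
  intros Hxy Hd Hg Hh Hle.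
  assert (Hi : is_RInt g x y (f y - f x))
    by (apply (is_RInt_derive (V := R_CompleteNormedModule));
        rewrite Rmin_left, Rmax_right by exact Hxy; assumption).
  rewrite <- (is_RInt_unique _ _ _ _ Hi).
  eapply Rle_trans; [apply abs_RInt_le; [exact Hxy | eexists; exact Hi]|].
  apply RInt_le; [exact Hxy | | | exact Hle];
    apply (ex_RInt_continuous (V := R_CompleteNormedModule));
    rewrite Rmin_left, Rmax_right by exact Hxy; intros z Hz; [|apply Hh; exact Hz].
  apply (continuous_Rabs_comp g), Hg; exact Hz.
Qed.

Lemma abs_max_interior u a b t0 : continuous_on_cc u a b -> u a = 0 -> u b = 0 ->
  a < t0 < b -> u t0 <> 0 ->
  exists c, a < c < b /\ 0 < Rabs (u c) /\ forall s, a <= s <= b -> Rabs (u s) <= Rabs (u c).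
Proof.
  intros Hu Hua Hub Ht0 Hut0.
  destruct (continuity_ab_maj (fun s => Rabs (u (clamp a b s))) a b) as [c [Hmax Hc]];
    [lra | intros s _; apply continuity_pt_filterlim;
           apply (continuous_Rabs_comp (fun s => u (clamp a b s))), continuous_clamp_comp;
           [lra | exact Hu] |].
  rewrite clamp_id in Hmax by exact Hc.
  assert (Hmax' : forall s, a <= s <= b -> Rabs (u s) <= Rabs (u c))
    by (intros s Hs; specialize (Hmax s Hs); rewrite clamp_id in Hmax by exact Hs; exact Hmax).
  assert (Hpos : 0 < Rabs (u c))
    by (apply Rlt_le_trans with (Rabs (u t0)); [apply Rabs_pos_lt; exact Hut0 | apply Hmax'; lra]).
  exists c; split; [|split; assumption].
  split; apply Rnot_le_lt; intros Hle;
    [replace c with a in Hpos by lra; rewrite Hua in Hpos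
    |replace c with b in Hpos by lra; rewrite Hub in Hpos];
    rewrite Rabs_R0 in Hpos; lra.
Qed.

(* On [(a, b)] the equation says [u'' = - q (t - a)^(alpha - 2) u]. *)
Lemma derivative_variation_le alpha a b q u u' M x y : a <= b ->
  continuous_on_cc q a b -> deriv_on_cc u u' a b ->
  (forall t, a < t < b -> conformable_deriv2_lim alpha a u' t (- (q t * u t))) ->
  (forall s, a <= s <= b -> Rabs (u s) <= M) ->
  a < x <= y -> y < b ->
  Rabs (u' y - u' x) <= M * RInt (weight q a b alpha) x y.
Proof.
  intros Hab Hq Hd Heq HM Hx Hy.
  set (ddu := fun t => - (q (clamp a b t) * u (clamp a b t)) * Rpower (t - a) (alpha - 2)).
  assert (Hu := deriv_on_cc_continuous_on_cc _ _ _ _ Hd).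
  rewrite <- (RInt_scal (V := R_CompleteNormedModule))
    by (apply ex_RInt_weight; [exact Hab | exact Hq | lra | lra]).
  apply (Rabs_sub_le_RInt u' ddu); [lra | | | |].
  - intros z Hz; unfold ddu; rewrite !clamp_id by lra.
    apply conformable_deriv2_lim_derive, Heq; lra.
  - intros z Hz; apply (continuous_mult (K := R_AbsRing)); [|apply continuous_Rpower_shift; lra].
    apply (continuous_opp (V := R_NormedModule)), (continuous_mult (K := R_AbsRing));
      apply continuous_clamp_comp; assumption.
  - intros z Hz; apply (continuous_scal_r (K := R_AbsRing) (V := R_NormedModule)).
    apply continuous_weight; [lra | exact Hq | lra].
  - intros z Hz; unfold ddu, weight, scal; simpl; unfold mult; simpl.
    rewrite Rabs_mult, Rabs_Ropp, Rabs_mult, (Rabs_right (Rpower _ _))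
      by (left; apply Rpower_gt_0).
    rewrite !clamp_id by lra.
    replace (M * (Rabs (q z) * Rpower (z - a) (alpha - 2)))
      with (Rabs (q z) * M * Rpower (z - a) (alpha - 2)) by ring.
    apply Rmult_le_compat_r; [left; apply Rpower_gt_0|].
    apply Rmult_le_compat_l; [apply Rabs_pos | apply HM; lra].
Qed.

(* With [x = c - a] and [y = b - c], the two slopes differ by [|U| (x + y) / (x y)], and
   [(x + y) / (x y) >= 4 / (x + y)] by AM-GM. *)
Lemma four_div_le_of_slopes a b c U A B I : a < c < b ->
  (c - a) * A = U -> (b - c) * B = - U -> 0 < Rabs U -> Rabs (B - A) <= Rabs U * I ->
  4 / (b - a) <= I.
Proof.
  intros Hc HA HB HU Hle.
  set (x := c - a) in *; set (y := b - c) in *.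
  assert (Hx : 0 < x) by (unfold x; lra); assert (Hy : 0 < y) by (unfold y; lra).
  set (S := (x + y) / (x * y)).
  assert (E : B - A = - U * S).
  { unfold S; apply Rmult_eq_reg_l with (x * y); [|nra].
    replace (x * y * (B - A)) with (x * (y * B) - y * (x * A)) by ring.
    rewrite HA, HB; field; lra. }
  rewrite E, Rabs_mult, Rabs_Ropp, (Rabs_right S) in Hle
    by (left; unfold S; apply Rdiv_lt_0_compat; nra).
  assert (S <= I) by (apply Rmult_le_reg_l with (Rabs U); assumption).
  assert (0 <= S - 4 / (b - a)); [|lra].
  replace (S - 4 / (b - a)) with ((x - y) ^ 2 / (x * y * (x + y)))
    by (replace (b - a) with (x + y) by (unfold x, y; ring); unfold S; field; lra).
  apply Rdiv_le_0_compat; [apply pow2_ge_0 | apply Rmult_lt_0_compat; nra].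
Qed.

Theorem theorem2 (alpha a b : R) (q u : R -> R) :
  1 < alpha < 2 -> a < b ->
  continuous_on_cc q a b ->
  (exists u' : R -> R,
      deriv_on_cc u u' a b /\
      continuous_on_cc u' a b /\
      abs_continuous_on u' a b /\
      (forall t, a < t < b -> exists l, derivable_pt_lim u' t l) /\
      (forall t, a < t < b -> conformable_deriv2_lim alpha a u' t (- (q t * u t))) /\
      u a = 0 /\ u b = 0) ->
  null_set (fun t => a < t < b /\ u t = 0) ->
  exists I : R,
    improper_integral_left (fun s => Rabs (q s) * Rpower (s - a) (alpha - 2)) a b I /\
    I >= 4 / (b - a).
Proof.
  intros Hal Hab Hq [u' [Hd [_ [_ [_ [Heq [Hua Hub]]]]]]] Hnull.
  destruct (improper_integral_weight q a b alpha ltac:(lra) Hab Hq) as [I [HI HIge]].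
  exists I; split; [exact HI | apply Rle_ge].
  destruct (null_set_interval_exists_not a b (fun t => u t = 0) Hab Hnull) as [t0 [Ht0 Hut0]].
  destruct (abs_max_interior u a b t0 (deriv_on_cc_continuous_on_cc _ _ _ _ Hd) Hua Hub Ht0 Hut0)
    as [c [Hc [Hpos Hmax]]].
  destruct (deriv_on_cc_MVT u u' a b a c Hd ltac:(lra) ltac:(lra)) as [x1 [Hx1 E1]].
  destruct (deriv_on_cc_MVT u u' a b c b Hd ltac:(lra) ltac:(lra)) as [x2 [Hx2 E2]].
  rewrite Hua, Rmult_comm in E1; rewrite Hub, Rmult_comm in E2.
  apply (four_div_le_of_slopes a b c (u c) (u' x1) (u' x2) I Hc ltac:(lra) ltac:(lra) Hpos).
  eapply Rle_trans; [apply (derivative_variation_le alpha a b q u u' (Rabs (u c)));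
    [lra | exact Hq | exact Hd | exact Heq | exact Hmax | lra | lra]|].
  apply Rmult_le_compat_l; [apply Rabs_pos|].
  eapply Rle_trans; [apply RInt_weight_le with (z := b); [lra | exact Hq | lra | lra]|].
  apply HIge; lra.
Qed.
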